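(* Let $k\ge2$, $d>0$ with $2d/k\le1$, and $t\ge1$. Let $T$ be a Galton–Watson tree of depth $t$ rooted at $u$ with $\mathrm{Poisson}(d)$ offspring distribution, let $R$ be the set of vertices of $T$ at depth $t$, and, independently of $T$, assign i.i.d. uniform labels $X_v\in[k]$ to the vertices of $T$; for every edge $(i,j)$ of $T$ let $Y_{ij}=\mathbf 1\{X_i=X_j\}$. Let $P^{(t)}_x$ denote the joint law of $(T,X_R,\{Y_e\}_{e\in E(T)})$ conditioned on $X_u=x$. Then $$\max_{x,x'\in[k]}d_{\mathrm{TV}}\bigl(P^{(t)}_x,P^{(t)}_{x'}\bigr)\to0\qquad\text{as }t\to\infty.$$
   Context: $d_{\mathrm{TV}}$ denotes total variation distance; $[k]=\{1,\dots,k\}$. *)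

From Stdlib Require Import Reals Lra Lia List Arith.
Import ListNotations.
Open Scope R_scope.

Inductive tree : Type := Node : list tree -> tree.

(* Probability that a Galton-Watson tree with Poisson(d) offspring,
   truncated at depth t (vertices at depth t get no children), equals tau.
   Zero for trees that are not truncated at depth t. *)
Fixpoint gw_prob (d : R) (t : nat) (tau : tree) : R :=
  match t, tau with
  | O, Node nil => 1
  | O, Node (_ :: _) => 0
  | S n, Node cs =>
      (exp (- d) * d ^ (length cs) / INR (fact (length cs)))
      * fold_right Rmult 1 (map (gw_prob d n) cs)
  end.

(* Observation attached to a tree: at a vertex at depth t we observe its
   label (OLeaf x, the X_R part); at a vertex of depth < t we observe, for each
   child edge (in order), the indicator Y_e together with the observation of
   the child's subtree. *)
Inductive obs : Type :=
| OLeaf : nat -> obs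
| ONode : list (bool * obs) -> obs.

Definition sum_labels (k : nat) (f : nat -> R) : R :=
  fold_right Rplus 0 (map f (seq 1 k)).

(* Conditional probability of observation o given tree tau (depth t) and
   root label x, when labels of non-root vertices are i.i.d. uniform on [k]. *)
Fixpoint lik (k t : nat) (tau : tree) (x : nat) (o : obs) : R :=
  match t with
  | O => match tau, o with
         | Node nil, OLeaf y => if Nat.eqb x y then 1 else 0
         | _, _ => 0
         end
  | S n => match tau, o with
           | Node cs, ONode ys =>
               if Nat.eqb (length cs) (length ys) then
                 fold_right Rmult 1
                   (map (fun p : tree * (bool * obs) =>
                           let '(c, (b, oc)) := p in
                           sum_labels k (fun z =>
                             / INR k
                             * (if Bool.eqb b (Nat.eqb z x) then 1 else 0)
                             * lik k n c z oc))
                        (combine cs ys))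
               else 0
           | _, _ => 0
           end
  end.

(* P^{(t)}_x : joint law of (T, X_R, (Y_e)_e) given X_u = x, as a
   probability mass function on the countable space tree * obs. *)
Definition P_law (d : R) (k t x : nat) (w : tree * obs) : R :=
  gw_prob d t (fst w) * lik k t (fst w) x (snd w).

(* d_TV(P,Q) <= eps for pmfs on a countable space:
   d_TV = 1/2 sum_w |P w - Q w|, the sum being the sup of finite partial sums. *)
Definition dTV_le {A : Type} (P Q : A -> R) (eps : R) : Prop :=
  forall l : list A, NoDup l ->
    / 2 * fold_right Rplus 0 (map (fun w => Rabs (P w - Q w)) l) <= eps.

(* Let D_t(x, x') be the one-sided distance sum_w (P_x w - P_x' w)^+ at depth t.  Given
   the number m of children of the root, the law at depth t+1 is the m-fold product of the
   law of one child edge (Y_e together with the observed subtree), and the one-sided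
   distance of that edge law is (D_t(x, x') + D_t(x', x)) / k <= s.  The excess of an m-fold
   product over another is at most 1 - (1 - s)^m, so averaging over m ~ Poisson(d) gives
   D_{t+1} <= 1 - exp (- d s).  Hence D_t <= q_t with q_0 = 1 and
   q_{t+1} = 1 - exp (- (2d/k) q_t); when 2d/k <= 1 this gives q_{t+1} <= q_t - q_t^2 / 4,
   so q_t -> 0.  The countable sums are controlled through finite enumerations of the
   observed trees with at most M children per vertex. *)

From Stdlib Require Import Reals List Arith Lra Lia.
Import ListNotations.
Open Scope R_scope.

Definition sumR {A} (f : A -> R) (l : list A) : R := fold_right Rplus 0 (map f l).
Definition prodR {A} (f : A -> R) (l : list A) : R := fold_right Rmult 1 (map f l).

Section FiniteSums.
Context {A : Type}.
Implicit Types (f g : A -> R) (l : list A).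

Lemma sumR_app f l1 l2 : sumR f (l1 ++ l2) = sumR f l1 + sumR f l2.
Proof. induction l1; unfold sumR in *; cbn; [lra|]. rewrite IHl1; lra. Qed.

Lemma sumR_ext_in f g l : (forall x, In x l -> f x = g x) -> sumR f l = sumR g l.
Proof. intros H. unfold sumR. f_equal. apply map_ext_in. exact H. Qed.

Lemma sumR_le_in f g l : (forall x, In x l -> f x <= g x) -> sumR f l <= sumR g l.
Proof.
  induction l as [|x l IH]; intros H; cbn; [lra|].
  assert (f x <= g x) by (apply H; left; reflexivity).
  assert (sumR f l <= sumR g l) by (apply IH; intros; apply H; right; assumption).
  unfold sumR in *; lra.
Qed.

Lemma sumR_nonneg f l : (forall x, In x l -> 0 <= f x) -> 0 <= sumR f l.
Proof.
  induction l as [|x l IH]; intros H; cbn; [lra|].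
  assert (0 <= f x) by (apply H; left; reflexivity).
  assert (0 <= sumR f l) by (apply IH; intros; apply H; right; assumption).
  unfold sumR in *; lra.
Qed.

Lemma sumR_plus f g l : sumR (fun x => f x + g x) l = sumR f l + sumR g l.
Proof. induction l; unfold sumR in *; cbn; [lra|]. rewrite IHl; lra. Qed.

Lemma sumR_minus f g l : sumR (fun x => f x - g x) l = sumR f l - sumR g l.
Proof. induction l; unfold sumR in *; cbn; [lra|]. rewrite IHl; lra. Qed.

Lemma sumR_scal c f l : sumR (fun x => c * f x) l = c * sumR f l.
Proof. induction l; unfold sumR in *; cbn; [lra|]. rewrite IHl; lra. Qed.

Lemma sumR_const c l : sumR (fun _ => c) l = INR (length l) * c.
Proof.
  induction l; unfold sumR in *; cbn [map fold_right length]; [cbn; lra|].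
  rewrite S_INR, IHl; lra.
Qed.

Lemma sumR_nonzero f l : sumR f l <> 0 -> exists x, In x l /\ f x <> 0.
Proof.
  induction l as [|x l IH]; unfold sumR; cbn; intros H; [lra|].
  destruct (Req_dec (f x) 0) as [E|E].
  - destruct IH as [y [Hy Hfy]]; [unfold sumR; intros E'; apply H; rewrite E, E'; lra|].
    exists y; auto.
  - exists x; auto.
Qed.

Lemma sumR_le_of_support f l U :
  NoDup l -> (forall x, 0 <= f x) -> (forall x, In x l -> f x <> 0 -> In x U) ->
  sumR f l <= sumR f U.
Proof.
  revert U; induction l as [|x l IH]; intros U Hnd Hpos Hin.
  - apply sumR_nonneg; auto.
  - inversion_clear Hnd as [|? ? Hx Hl].
    change (f x + sumR f l <= sumR f U).
    destruct (Req_dec (f x) 0) as [E|E].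
    + rewrite E. assert (sumR f l <= sumR f U); [|lra].
      apply IH; auto. intros; apply Hin; auto; right; assumption.
    + destruct (in_split x U) as [U1 [U2 ->]]; [apply Hin; auto; left; reflexivity|].
      assert (sumR f l <= sumR f (U1 ++ U2)).
      { apply IH; auto. intros y Hy Hfy.
        destruct (in_app_or _ _ _ (Hin y (or_intror Hy) Hfy)) as [H|[H|H]];
          apply in_or_app; auto. subst; contradiction. }
      rewrite sumR_app in *. change (sumR f (x :: U2)) with (f x + sumR f U2). lra.
Qed.

Lemma prodR_mult f g l : prodR (fun x => f x * g x) l = prodR f l * prodR g l.
Proof. induction l; unfold prodR in *; cbn; [lra|]. rewrite IHl; ring. Qed.

Lemma prodR_le f g l : (forall x, In x l -> 0 <= f x <= g x) -> 0 <= prodR f l <= prodR g l.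
Proof.
  induction l as [|x l IH]; intros H; unfold prodR in *; cbn; [lra|].
  destruct (H x (or_introl eq_refl)).
  destruct IH as [Hl1 Hl2]; [intros; apply H; right; assumption|].
  split; [apply Rmult_le_pos | apply Rmult_le_compat]; lra.
Qed.

Lemma prodR_nonneg f l : (forall x, In x l -> 0 <= f x) -> 0 <= prodR f l.
Proof. intros H. apply (prodR_le f f). intros x Hx; specialize (H x Hx); lra. Qed.

Lemma prodR_nonzero f l x : prodR f l <> 0 -> In x l -> f x <> 0.
Proof.
  induction l as [|y l IH]; unfold prodR; cbn; intros H Hx; [tauto|].
  destruct Hx as [<-|Hx]; intros E; apply H; [rewrite E; lra|].
  destruct (Req_dec (prodR f l) 0) as [E'|E']; [unfold prodR in E'; rewrite E'; lra|].
  exfalso; exact (IH E' Hx E).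
Qed.

End FiniteSums.

Lemma sumR_map {A B} (f : B -> R) (g : A -> B) l : sumR f (map g l) = sumR (fun x => f (g x)) l.
Proof. unfold sumR; rewrite map_map; reflexivity. Qed.

Lemma sumR_flat_map {A B} (f : B -> R) (g : A -> list B) l :
  sumR f (flat_map g l) = sumR (fun x => sumR f (g x)) l.
Proof. induction l; cbn [flat_map]; [reflexivity|]. rewrite sumR_app, IHl. reflexivity. Qed.

Lemma sumR_swap {A B} (f : A -> B -> R) l1 l2 :
  sumR (fun x => sumR (f x) l2) l1 = sumR (fun y => sumR (fun x => f x y) l1) l2.
Proof.
  induction l1 as [|x l1 IH].
  - change (0 = sumR (fun _ => 0) l2). rewrite sumR_const; ring.
  - change (sumR (f x) l2 + sumR (fun x => sumR (f x) l2) l1 =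
            sumR (fun y => f x y + sumR (fun x => f x y) l1) l2).
    rewrite sumR_plus, IH. reflexivity.
Qed.

Lemma sumR_indicator (h : nat -> R) a l :
  NoDup l -> In a l -> sumR (fun z => if Nat.eqb z a then h z else 0) l = h a.
Proof.
  induction l as [|z l IH]; intros Hnd Ha; [destruct Ha|]. inversion_clear Hnd as [|? ? Hz Hl].
  change ((if Nat.eqb z a then h z else 0) + sumR (fun z => if Nat.eqb z a then h z else 0) l = h a).
  destruct (Nat.eqb_spec z a) as [<-|Hne].
  - rewrite (sumR_ext_in _ (fun _ => 0)), sumR_const; [ring|].
    intros y Hy. destruct (Nat.eqb_spec y z); [subst; contradiction|reflexivity].
  - destruct Ha as [->|Ha]; [contradiction|]. rewrite IH; auto; ring.
Qed.

Lemma sumR_seq0 (f : nat -> R) M : sumR f (seq 0 (S M)) = sum_f_R0 f M.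
Proof.
  induction M; [unfold sumR; cbn; ring|].
  rewrite seq_S, sumR_app, IHM. unfold sumR; cbn. ring.
Qed.

Fixpoint tuples {A} (m : nat) (P : list A) : list (list A) :=
  match m with
  | O => [[]]
  | S m => flat_map (fun p => map (cons p) (tuples m P)) P
  end.

Lemma sumR_prodR_tuples {A} (f : A -> R) P m :
  sumR (prodR f) (tuples m P) = sumR f P ^ m.
Proof.
  induction m; cbn [tuples pow]; [unfold sumR, prodR; cbn; ring|].
  rewrite sumR_flat_map, <- IHm, Rmult_comm, <- sumR_scal.
  apply sumR_ext_in. intros p _. rewrite sumR_map.
  rewrite Rmult_comm, <- sumR_scal. reflexivity.
Qed.

Lemma length_tuples {A} (P : list A) m ts : In ts (tuples m P) -> length ts = m.
Proof.
  revert ts; induction m; cbn; intros ts H.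
  - destruct H as [<-|[]]; reflexivity.
  - apply in_flat_map in H as [p [_ H]]. apply in_map_iff in H as [ts' [<- H]].
    cbn; f_equal; auto.
Qed.

Lemma incl_tuples {A} (P : list A) m ts : In ts (tuples m P) -> incl ts P.
Proof.
  revert ts; induction m; cbn; intros ts H.
  - destruct H as [<-|[]]. intros x [].
  - apply in_flat_map in H as [p [Hp H]]. apply in_map_iff in H as [ts' [<- H]].
    intros x [<-|Hx]; [assumption|exact (IHm ts' H x Hx)].
Qed.

Lemma In_tuples {A} (P : list A) ts : incl ts P -> In ts (tuples (length ts) P).
Proof.
  induction ts as [|p ts IH]; cbn; intros H; [left; reflexivity|].
  apply in_flat_map. exists p. split; [apply H; left; reflexivity|].
  apply in_map, IH. intros x Hx; apply H; right; assumption.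
Qed.

Lemma Rmin_sub_excess u v : Rmin u v = u - Rmax 0 (u - v).
Proof. unfold Rmin, Rmax; destruct (Rle_dec u v), (Rle_dec 0 (u - v)); lra. Qed.

Lemma inv_INR_nonneg k : 0 <= / INR k.
Proof. destruct k; [cbn; rewrite Rinv_0; lra|]. left; apply Rinv_0_lt_compat, lt_0_INR; lia. Qed.

Lemma Rmax0_scal c x : 0 <= c -> Rmax 0 (c * x) = c * Rmax 0 x.
Proof. intros Hc. unfold Rmax. destruct (Rle_dec 0 (c * x)), (Rle_dec 0 x); nra. Qed.

Lemma prodR_excess_le {A} (f g : A -> R) ts :
  (forall x, In x ts -> 0 <= f x /\ 0 <= g x) ->
  Rmax 0 (prodR f ts - prodR g ts) <= prodR f ts - prodR (fun x => Rmin (f x) (g x)) ts.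
Proof.
  intros H.
  assert (Hf : 0 <= prodR (fun x => Rmin (f x) (g x)) ts <= prodR f ts).
  { apply prodR_le. intros x Hx. specialize (H x Hx). pose proof (Rmin_l (f x) (g x)).
    split; [apply Rmin_glb|]; lra. }
  assert (Hg : 0 <= prodR (fun x => Rmin (f x) (g x)) ts <= prodR g ts).
  { apply prodR_le. intros x Hx. specialize (H x Hx). pose proof (Rmin_r (f x) (g x)).
    split; [apply Rmin_glb|]; lra. }
  apply Rmax_lub; lra.
Qed.

(* [A^m - (A - B)^m] is nondecreasing in [A] on [B <= A <= 1] and in [B]. *)
Lemma pow_sub_pow_le a b s m : 0 <= b <= a -> a <= 1 -> b <= s <= 1 ->
  a ^ m - (a - b) ^ m <= 1 - (1 - s) ^ m.
Proof.
  intros Hb Ha Hs. apply Rle_trans with (1 - (1 - b) ^ m).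
  2:{ assert ((1 - s) ^ m <= (1 - b) ^ m) by (apply pow_incr; lra). lra. }
  induction m; cbn [pow]; [lra|].
  assert ((a - b) ^ m <= (1 - b) ^ m) by (apply pow_incr; lra).
  assert ((a - b) ^ m <= a ^ m) by (apply pow_incr; lra).
  assert (0 <= (a - b) ^ m) by (apply pow_le; lra).
  assert (0 <= (1 - a) * (a ^ m - (a - b) ^ m)) by (apply Rmult_le_pos; lra).
  assert (0 <= b * ((1 - b) ^ m - (a - b) ^ m)) by (apply Rmult_le_pos; lra).
  nra.
Qed.

Lemma tuples_excess_le {A} (f g : A -> R) P m s :
  (forall x, In x P -> 0 <= f x /\ 0 <= g x) -> sumR f P <= 1 ->
  sumR (fun x => Rmax 0 (f x - g x)) P <= s <= 1 ->
  sumR (fun ts => Rmax 0 (prodR f ts - prodR g ts)) (tuples m P) <= 1 - (1 - s) ^ m.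
Proof.
  intros Hfg Hf Hs.
  apply Rle_trans with
    (sumR (fun ts => prodR f ts - prodR (fun x => Rmin (f x) (g x)) ts) (tuples m P)).
  { apply sumR_le_in. intros ts Hts. apply prodR_excess_le.
    intros x Hx. exact (Hfg x (incl_tuples P m ts Hts x Hx)). }
  rewrite sumR_minus, !sumR_prodR_tuples.
  rewrite (sumR_ext_in (fun x => Rmin (f x) (g x)) (fun x => f x - Rmax 0 (f x - g x))), sumR_minus
    by (intros; apply Rmin_sub_excess).
  apply pow_sub_pow_le; [split|..]; try lra.
  - apply sumR_nonneg. intros; apply Rmax_l.
  - apply sumR_le_in. intros x Hx. destruct (Hfg x Hx). apply Rmax_lub; lra.
Qed.

Definition poisson (d : R) (m : nat) : R := exp (- d) * d ^ m / INR (fact m).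

Lemma poisson_nonneg d m : 0 <= d -> 0 <= poisson d m.
Proof.
  intros Hd. unfold poisson, Rdiv. apply Rmult_le_pos; [apply Rmult_le_pos|].
  - left; apply exp_pos.
  - apply pow_le; assumption.
  - left; apply Rinv_0_lt_compat, lt_0_INR, lt_O_fact.
Qed.

Lemma exp_series_cv y : Un_cv (sum_f_R0 (fun i => / INR (fact i) * y ^ i)) (exp y).
Proof. unfold exp. destruct (exist_exp y) as [l H]. exact H. Qed.

Lemma poisson_partial_sum_le d M : 0 <= d -> sumR (poisson d) (seq 0 (S M)) <= 1.
Proof.
  intros Hd.
  rewrite (sumR_ext_in _ (fun m => exp (- d) * (/ INR (fact m) * d ^ m)))
    by (intros; unfold poisson, Rdiv; ring).
  rewrite sumR_scal, sumR_seq0.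
  apply Rle_trans with (exp (- d) * exp d).
  - apply Rmult_le_compat_l; [left; apply exp_pos|].
    apply sum_incr; [apply exp_series_cv|]. intros i. apply Rmult_le_pos.
    + left; apply Rinv_0_lt_compat, lt_0_INR, lt_O_fact.
    + apply pow_le; assumption.
  - rewrite <- exp_plus, Rplus_opp_l, exp_0. lra.
Qed.

(* Termwise comparison with the series of [exp d - exp (d (1 - s))]. *)
Lemma poisson_partial_sum_compl_le d s M : 0 <= d -> 0 <= s <= 1 ->
  sumR (fun m => poisson d m * (1 - (1 - s) ^ m)) (seq 0 (S M)) <= 1 - exp (- (d * s)).
Proof.
  intros Hd Hs.
  set (u := fun i => / INR (fact i) * d ^ i - / INR (fact i) * (d * (1 - s)) ^ i).
  rewrite (sumR_ext_in _ (fun m => exp (- d) * u m))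
    by (intros; unfold u, poisson, Rdiv; rewrite Rpow_mult_distr; ring).
  rewrite sumR_scal, sumR_seq0.
  apply Rle_trans with (exp (- d) * (exp d - exp (d * (1 - s)))).
  - apply Rmult_le_compat_l; [left; apply exp_pos|].
    apply sum_incr.
    + intros e He. destruct (CV_minus _ _ _ _ (exp_series_cv d) (exp_series_cv (d * (1 - s))) e He)
        as [N HN].
      exists N. intros n Hn. unfold u. rewrite minus_sum. apply HN; assumption.
    + intros i. unfold u. rewrite <- Rmult_minus_distr_l. apply Rmult_le_pos.
      * left; apply Rinv_0_lt_compat, lt_0_INR, lt_O_fact.
      * assert ((d * (1 - s)) ^ i <= d ^ i) by (apply pow_incr; nra). lra.
  - rewrite Rmult_minus_distr_l, <- !exp_plus, Rplus_opp_l, exp_0.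
    replace (- d + d * (1 - s)) with (- (d * s)) by ring. lra.
Qed.

Lemma exp_le_compat x y : x <= y -> exp x <= exp y.
Proof. intros [H|H]; [left; apply exp_increasing; assumption|right; rewrite H; reflexivity]. Qed.

Fixpoint tv_rate (c : R) (n : nat) : R :=
  match n with
  | O => 1
  | S n => 1 - exp (- (c * tv_rate c n))
  end.

Section TvRate.
Variable c : R.
Hypothesis c_range : 0 <= c <= 1.

Lemma tv_rate_range n : 0 <= tv_rate c n <= 1.
Proof.
  induction n; cbn [tv_rate]; [lra|].
  pose proof (exp_pos (- (c * tv_rate c n))).
  assert (exp (- (c * tv_rate c n)) <= exp 0) by (apply exp_le_compat; nra).
  rewrite exp_0 in *. lra.
Qed.

(* [exp (- q) = exp (- q / 2) ^ 2 >= (1 - q / 2) ^ 2]. *)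
Lemma tv_rate_S_le n : tv_rate c (S n) <= tv_rate c n - tv_rate c n ^ 2 / 4.
Proof.
  pose proof (tv_rate_range n) as Hq. cbn [tv_rate]. set (q := tv_rate c n) in *.
  assert (exp (- q) <= exp (- (c * q))) by (apply exp_le_compat; nra).
  assert (exp (- q) = exp (- q / 2) * exp (- q / 2)) by (rewrite <- exp_plus; f_equal; field).
  pose proof (exp_ineq1_le (- q / 2)).
  assert ((1 - q / 2) * (1 - q / 2) <= exp (- q / 2) * exp (- q / 2))
    by (apply Rmult_le_compat; lra).
  cbn [pow]. nra.
Qed.

Lemma tv_rate_le eps n : 0 < eps -> tv_rate c n <= Rmax eps (1 - INR n * eps ^ 2 / 4).
Proof.
  intros He. induction n; [cbn; apply Rmax_Rle; right; lra|].
  pose proof (tv_rate_S_le n). pose proof (tv_rate_range n).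
  apply Rmax_Rle. apply Rmax_Rle in IHn. rewrite S_INR.
  assert (0 <= tv_rate c n ^ 2 / 4) by (cbn; nra).
  destruct (Rle_lt_dec (tv_rate c n) eps); [left; lra|right].
  destruct IHn as [IHn|IHn]; [lra|].
  assert (eps ^ 2 <= tv_rate c n ^ 2) by (apply pow_incr; lra). lra.
Qed.

Lemma tv_rate_eventually_le eps : 0 < eps ->
  exists T, forall n, (T <= n)%nat -> tv_rate c n <= eps.
Proof.
  intros He. destruct (INR_unbounded (4 / eps ^ 2)) as [T HT].
  exists T. intros n Hn.
  destruct (Rmax_Rle eps (1 - INR n * eps ^ 2 / 4) (tv_rate c n)) as [H _].
  destruct (H (tv_rate_le eps n He)) as [Hq|Hq]; [assumption|].
  assert (INR T <= INR n) by (apply le_INR; assumption).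
  assert (0 < eps ^ 2) by (apply pow_lt; assumption).
  assert (4 / eps ^ 2 * eps ^ 2 = 4) by (field; lra).
  nra.
Qed.

End TvRate.

Definition edge_lik (k n a : nat) (c : tree) (b : bool) (oc : obs) : R :=
  sum_labels k (fun z => / INR k * (if Bool.eqb b (Nat.eqb z a) then 1 else 0) * lik k n c z oc).

(* A child edge [(b, (c, oc))]: the indicator [Y_e = b] and the child subtree with its
   observation. *)
Definition graft (ts : list (bool * (tree * obs))) : tree * obs :=
  (Node (map (fun e => fst (snd e)) ts), ONode (map (fun e => (fst e, snd (snd e))) ts)).

Definition edge_choices (U : list (tree * obs)) : list (bool * (tree * obs)) :=
  map (pair true) U ++ map (pair false) U.

(* All observed trees of depth [t] with at most [M] children per vertex and leaf labels
   in [[k]], possibly with repetitions. *)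
Fixpoint enum (k t M : nat) : list (tree * obs) :=
  match t with
  | O => map (fun y => (Node [], OLeaf y)) (seq 1 k)
  | S n => flat_map (fun m => map graft (tuples m (edge_choices (enum k n M)))) (seq 0 (S M))
  end.

Definition child_weight (d : R) (k n a : nat) (e : bool * (tree * obs)) : R :=
  gw_prob d n (fst (snd e)) * edge_lik k n a (fst (snd e)) (fst e) (snd (snd e)).

Fixpoint tsize (tau : tree) : nat :=
  match tau with Node cs => S (list_sum (map tsize cs)) end.

Lemma sum_labels_sumR k f : sum_labels k f = sumR f (seq 1 k).
Proof. reflexivity. Qed.

Lemma sumR_edge_choices f U :
  sumR f (edge_choices U) = sumR (fun w => f (true, w) + f (false, w)) U.
Proof. unfold edge_choices. rewrite sumR_app, !sumR_map, sumR_plus. reflexivity. Qed.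

Lemma lik_nonneg k t tau a o : 0 <= lik k t tau a o.
Proof.
  revert tau a o; induction t; intros [cs] a o.
  - destruct cs, o; cbn; try lra. destruct Nat.eqb; lra.
  - destruct o as [y|ys]; cbn; [lra|]. destruct Nat.eqb; [|lra].
    apply prodR_nonneg. intros [c [b oc]] _. apply sumR_nonneg. intros z _.
    apply Rmult_le_pos; [apply Rmult_le_pos|]; auto using inv_INR_nonneg.
    destruct Bool.eqb; lra.
Qed.

Lemma gw_prob_nonneg d t tau : 0 <= d -> 0 <= gw_prob d t tau.
Proof.
  intros Hd. revert tau; induction t; intros [cs]; [destruct cs; cbn; lra|].
  apply Rmult_le_pos; [apply (poisson_nonneg d (length cs) Hd)|]. apply prodR_nonneg; auto.
Qed.

Lemma P_law_nonneg d k t a w : 0 <= d -> 0 <= P_law d k t a w.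
Proof. intros Hd. apply Rmult_le_pos; auto using gw_prob_nonneg, lik_nonneg. Qed.

Lemma edge_lik_nonneg k n a c b oc : 0 <= edge_lik k n a c b oc.
Proof.
  apply sumR_nonneg. intros z _.
  apply Rmult_le_pos; [apply Rmult_le_pos|]; auto using inv_INR_nonneg, lik_nonneg.
  destruct Bool.eqb; lra.
Qed.

Lemma child_weight_nonneg d k n a e : 0 <= d -> 0 <= child_weight d k n a e.
Proof. intros Hd. apply Rmult_le_pos; auto using gw_prob_nonneg, edge_lik_nonneg. Qed.

Lemma edge_lik_true k n a c oc : (1 <= a <= k)%nat ->
  edge_lik k n a c true oc = / INR k * lik k n c a oc.
Proof.
  intros Ha. unfold edge_lik. rewrite sum_labels_sumR.
  rewrite (sumR_ext_in _ (fun z => / INR k * (if Nat.eqb z a then lik k n c z oc else 0)))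
    by (intros z _; destruct (z =? a)%nat; cbn; ring).
  rewrite sumR_scal, sumR_indicator; [reflexivity|apply seq_NoDup|apply in_seq; lia].
Qed.

Lemma edge_lik_true_false k n a c oc :
  edge_lik k n a c true oc + edge_lik k n a c false oc =
  / INR k * sum_labels k (fun z => lik k n c z oc).
Proof.
  unfold edge_lik. rewrite !sum_labels_sumR.
  rewrite <- sumR_scal, <- sumR_plus. apply sumR_ext_in.
  intros z _. destruct (z =? a)%nat; cbn; ring.
Qed.

Lemma combine_map {A B C} (f : A -> B) (g : A -> C) l :
  combine (map f l) (map g l) = map (fun x => (f x, g x)) l.
Proof. induction l; cbn; f_equal; assumption. Qed.

Lemma P_law_graft d k n a ts :
  P_law d k (S n) a (graft ts) = poisson d (length ts) * prodR (child_weight d k n a) ts.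
Proof.
  unfold P_law, graft, child_weight. cbn [fst snd gw_prob lik].
  rewrite !length_map, Nat.eqb_refl, combine_map, !map_map.
  rewrite prodR_mult. unfold poisson, prodR, edge_lik. ring.
Qed.

Lemma graft_combine cs ys : length cs = length ys ->
  graft (map (fun p => (fst (snd p), (fst p, snd (snd p)))) (combine cs ys)) = (Node cs, ONode ys).
Proof.
  unfold graft. rewrite !map_map. cbn.
  revert ys; induction cs as [|c cs IH]; intros [|[b o] ys] H; cbn in *; try lia; [reflexivity|].
  injection H as H. specialize (IH ys H). injection IH as -> ->. reflexivity.
Qed.

Lemma le_list_sum_In {A} (f : A -> nat) x l : In x l -> (f x <= list_sum (map f l))%nat.
Proof.
  induction l as [|y l IH]; intros Hx; [destruct Hx|].
  change (list_sum (map f (y :: l))) with (f y + list_sum (map f l))%nat.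
  destruct Hx as [->|Hx]; [lia|]. specialize (IH Hx). lia.
Qed.

Lemma length_le_list_sum_tsize cs : (length cs <= list_sum (map tsize cs))%nat.
Proof.
  induction cs as [|[c] cs IH]; [reflexivity|].
  change (S (length cs) <= tsize (Node c) + list_sum (map tsize cs))%nat. cbn [tsize]. lia.
Qed.

Lemma lik_nonzero_In_enum k t M tau o a : (1 <= a <= k)%nat ->
  lik k t tau a o <> 0 -> (tsize tau <= M)%nat -> In (tau, o) (enum k t M).
Proof.
  revert M tau o a; induction t; intros M [cs] o a Ha Hlik Hsize.
  - destruct cs, o as [y|ys]; cbn in Hlik; try lra.
    destruct (Nat.eqb_spec a y) as [<-|]; [|lra].
    apply (in_map (fun y => (Node [], OLeaf y))), in_seq. lia.
  - destruct o as [y|ys]; [cbn in Hlik; lra|].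
    cbn [lik] in Hlik. destruct (Nat.eqb_spec (length cs) (length ys)) as [Hlen|]; [|lra].
    set (ts := map (fun p => (fst (snd p), (fst p, snd (snd p)))) (combine cs ys)).
    assert (Hts : length ts = length cs) by (unfold ts; rewrite length_map, length_combine; lia).
    cbn [enum]. apply in_flat_map. exists (length cs). split.
    { apply in_seq. cbn in Hsize. pose proof (length_le_list_sum_tsize cs). lia. }
    rewrite <- (graft_combine cs ys Hlen). apply in_map. fold ts. rewrite <- Hts.
    apply In_tuples. intros e He. unfold ts in He.
    apply in_map_iff in He as [[c [b oc]] [<- Hp]].
    pose proof (prodR_nonzero _ _ _ Hlik Hp) as Hedge. cbv beta iota in Hedge.
    apply sumR_nonzero in Hedge as [z [Hz Hz0]]. apply in_seq in Hz.
    assert (In (c, oc) (enum k t M)).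
    { apply (IHt M c oc z); [lia| |].
      - intros E0. apply Hz0. rewrite E0. ring.
      - apply in_combine_l, (le_list_sum_In tsize) in Hp. cbn in Hsize. lia. }
    unfold edge_choices. apply in_or_app. destruct b; [left|right]; apply in_map; assumption.
Qed.

Section ChildWeights.
Variables (d : R) (k n : nat) (U : list (tree * obs)).
Hypothesis k_pos : (1 <= k)%nat.

Lemma child_weight_sum_le a :
  (forall z, (1 <= z <= k)%nat -> sumR (P_law d k n z) U <= 1) ->
  sumR (child_weight d k n a) (edge_choices U) <= 1.
Proof.
  intros Hmass. rewrite sumR_edge_choices.
  rewrite (sumR_ext_in _ (fun w => / INR k * sumR (fun z => P_law d k n z w) (seq 1 k))).
  2:{ intros w _. unfold child_weight, P_law; cbn [fst snd].
      rewrite <- Rmult_plus_distr_l, edge_lik_true_false, sum_labels_sumR, <- !sumR_scal.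
      apply sumR_ext_in; intros; ring. }
  rewrite sumR_scal, sumR_swap.
  apply Rle_trans with (/ INR k * sumR (fun _ => 1) (seq 1 k)).
  - apply Rmult_le_compat_l; [apply inv_INR_nonneg|].
    apply sumR_le_in. intros z Hz. apply Hmass. apply in_seq in Hz; lia.
  - rewrite sumR_const, length_seq. right. field. apply not_0_INR; lia.
Qed.

(* Along an edge with [Y_e = 1] the excess of the child weights is that of the child's
   law; along an edge with [Y_e = 0] the sign is reversed. *)
Lemma child_weight_excess_sum a b : (1 <= a <= k)%nat -> (1 <= b <= k)%nat ->
  sumR (fun e => Rmax 0 (child_weight d k n a e - child_weight d k n b e)) (edge_choices U) =
  / INR k * (sumR (fun w => Rmax 0 (P_law d k n a w - P_law d k n b w)) U
             + sumR (fun w => Rmax 0 (P_law d k n b w - P_law d k n a w)) U).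
Proof.
  intros Ha Hb. rewrite sumR_edge_choices, <- sumR_plus, <- sumR_scal.
  apply sumR_ext_in. intros [tau o] _. unfold child_weight, P_law; cbn [fst snd].
  assert (Efalse : edge_lik k n a tau false o - edge_lik k n b tau false o =
                   / INR k * (lik k n tau b o - lik k n tau a o)).
  { pose proof (edge_lik_true_false k n a tau o). pose proof (edge_lik_true_false k n b tau o).
    rewrite !edge_lik_true in * by assumption. lra. }
  rewrite Rmult_plus_distr_l, <- !Rmax0_scal, !edge_lik_true by (assumption || apply inv_INR_nonneg).
  rewrite <- (Rmult_minus_distr_l _ (edge_lik _ _ _ _ _ _)), Efalse.
  f_equal; f_equal; ring.
Qed.

End ChildWeights.

Lemma sumR_enum_S f k n M :
  sumR f (enum k (S n) M) =
  sumR (fun m => sumR (fun ts => f (graft ts)) (tuples m (edge_choices (enum k n M))))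
       (seq 0 (S M)).
Proof. cbn [enum]. rewrite sumR_flat_map. apply sumR_ext_in; intros. apply sumR_map. Qed.

Section Enumeration.
Variables (d : R) (k : nat).
Hypotheses (d_nonneg : 0 <= d) (k_ge2 : (2 <= k)%nat) (rate_le1 : 2 * d / INR k <= 1).

Lemma enum_mass_le n M a : (1 <= a <= k)%nat -> sumR (P_law d k n a) (enum k n M) <= 1.
Proof.
  revert M a; induction n; intros M a Ha.
  - cbn [enum]. rewrite sumR_map.
    rewrite (sumR_ext_in _ (fun y => if Nat.eqb y a then 1 else 0)).
    + rewrite sumR_indicator; [lra|apply seq_NoDup|apply in_seq; lia].
    + intros y _. unfold P_law; cbn. rewrite Nat.eqb_sym. destruct (y =? a)%nat; ring.
  - rewrite sumR_enum_S.
    apply Rle_trans with (sumR (poisson d) (seq 0 (S M))); [|apply poisson_partial_sum_le; assumption].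
    apply sumR_le_in. intros m _.
    rewrite (sumR_ext_in _ (fun ts => poisson d m * prodR (child_weight d k n a) ts))
      by (intros ts Hts; rewrite P_law_graft, (length_tuples _ _ _ Hts); reflexivity).
    rewrite sumR_scal, sumR_prodR_tuples.
    assert (0 <= sumR (child_weight d k n a) (edge_choices (enum k n M)) <= 1).
    { split; [apply sumR_nonneg; intros; apply child_weight_nonneg; assumption|].
      apply child_weight_sum_le; [lia|]. intros z Hz; apply IHn; assumption. }
    assert (sumR (child_weight d k n a) (edge_choices (enum k n M)) ^ m <= 1)
      by (rewrite <- (pow1 m); apply pow_incr; assumption).
    pose proof (poisson_nonneg d m d_nonneg). nra.
Qed.

Lemma enum_excess_le n M a b : (1 <= a <= k)%nat -> (1 <= b <= k)%nat ->
  sumR (fun w => Rmax 0 (P_law d k n a w - P_law d k n b w)) (enum k n M)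
  <= tv_rate (2 * d / INR k) n.
Proof.
  revert M a b; induction n; intros M a b Ha Hb.
  - apply Rle_trans with (sumR (P_law d k 0 a) (enum k 0 M)); [|apply enum_mass_le; assumption].
    apply sumR_le_in. intros w _.
    pose proof (P_law_nonneg d k 0 a w d_nonneg). pose proof (P_law_nonneg d k 0 b w d_nonneg).
    apply Rmax_lub; lra.
  - assert (Hk : 2 <= INR k) by (replace 2 with (INR 2) by reflexivity; apply le_INR; assumption).
    assert (Hc : 0 <= 2 * d / INR k <= 1).
    { split; [apply Rmult_le_pos; [lra|apply inv_INR_nonneg]|assumption]. }
    pose proof (tv_rate_range _ Hc n) as Hq.
    set (s := 2 * tv_rate (2 * d / INR k) n / INR k).
    assert (Hs : 0 <= s <= 1).
    { unfold s, Rdiv. split; [apply Rmult_le_pos; [lra|apply inv_INR_nonneg]|].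
      apply Rmult_le_reg_r with (INR k); [lra|].
      rewrite Rmult_assoc, Rinv_l by lra. lra. }
    cbn [tv_rate]. replace (2 * d / INR k * tv_rate (2 * d / INR k) n) with (d * s)
      by (unfold s; field; lra).
    eapply Rle_trans; [|apply (poisson_partial_sum_compl_le d s M d_nonneg Hs)].
    rewrite sumR_enum_S. apply sumR_le_in. intros m _.
    rewrite (sumR_ext_in _ (fun ts => poisson d m *
       Rmax 0 (prodR (child_weight d k n a) ts - prodR (child_weight d k n b) ts))).
    2:{ intros ts Hts. rewrite !P_law_graft, (length_tuples _ _ _ Hts), <- Rmult_minus_distr_l.
        apply Rmax0_scal, poisson_nonneg; assumption. }
    rewrite sumR_scal. apply Rmult_le_compat_l; [apply poisson_nonneg; assumption|].
    apply tuples_excess_le.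
    + intros e _. split; apply child_weight_nonneg; assumption.
    + apply child_weight_sum_le; [lia|]. intros z Hz; apply enum_mass_le; assumption.
    + split; [|apply Hs].
      rewrite child_weight_excess_sum by assumption.
      pose proof (IHn M a b Ha Hb). pose proof (IHn M b a Hb Ha).
      unfold s, Rdiv. rewrite (Rmult_comm (2 * _)). apply Rmult_le_compat_l; [apply inv_INR_nonneg|].
      lra.
Qed.

End Enumeration.

Lemma Rabs_excess_sum u : Rabs u = Rmax 0 u + Rmax 0 (- u).
Proof. unfold Rabs, Rmax. destruct (Rcase_abs u), (Rle_dec 0 u), (Rle_dec 0 (- u)); lra. Qed.

Lemma dTV_le_of_cover {A} (P Q : A -> R) eps :
  (forall l, NoDup l -> exists U,
     (forall w, In w l -> P w <> 0 \/ Q w <> 0 -> In w U) /\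
     sumR (fun w => Rmax 0 (P w - Q w)) U + sumR (fun w => Rmax 0 (Q w - P w)) U <= 2 * eps) ->
  dTV_le P Q eps.
Proof.
  intros Hcover l Hl. destruct (Hcover l Hl) as [U [HU Hsum]].
  change (/ 2 * sumR (fun w => Rabs (P w - Q w)) l <= eps).
  rewrite (sumR_ext_in _ (fun w => Rmax 0 (P w - Q w) + Rmax 0 (Q w - P w))) by
    (intros; rewrite Rabs_excess_sum, Ropp_minus_distr; reflexivity).
  enough (sumR (fun w => Rmax 0 (P w - Q w) + Rmax 0 (Q w - P w)) l <= 2 * eps) by lra.
  rewrite <- sumR_plus in Hsum. eapply Rle_trans; [|exact Hsum].
  apply sumR_le_of_support; [assumption| |].
  - intros w. pose proof (Rmax_l 0 (P w - Q w)). pose proof (Rmax_l 0 (Q w - P w)). lra.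
  - intros w Hw Hw0. apply HU; [assumption|].
    destruct (Req_dec (P w) 0) as [HP|HP]; [right|left; assumption].
    intros HQ. apply Hw0. rewrite HP, HQ, Rminus_0_r, Rmax_left; lra.
Qed.

Theorem mainTheorem10 :
  forall (k : nat) (d : R),
    (2 <= k)%nat -> 0 < d -> 2 * d / INR k <= 1 ->
    forall eps : R, 0 < eps ->
    exists T : nat, forall t : nat, (1 <= t)%nat -> (T <= t)%nat ->
      forall x x' : nat, (1 <= x <= k)%nat -> (1 <= x' <= k)%nat ->
        dTV_le (P_law d k t x) (P_law d k t x') eps.
Proof.
  intros k d Hk Hd Hdk eps He.
  assert (Hc : 0 <= 2 * d / INR k <= 1).
  { split; [apply Rmult_le_pos; [lra|apply inv_INR_nonneg]|assumption]. }
  destruct (tv_rate_eventually_le _ Hc eps He) as [T HT].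
  exists T. intros t _ Ht x x' Hx Hx'.
  apply dTV_le_of_cover. intros l _.
  set (M := list_sum (map (fun w => tsize (fst w)) l)).
  exists (enum k t M). split.
  - intros [tau o] Hw Hnz. unfold P_law in Hnz; cbn [fst snd] in Hnz.
    apply (le_list_sum_In (fun w => tsize (fst w))) in Hw.
    destruct Hnz as [Hnz|Hnz];
      [apply (lik_nonzero_In_enum k t M tau o x) | apply (lik_nonzero_In_enum k t M tau o x')];
      try assumption; intros E0; apply Hnz; rewrite E0; ring.
  - pose proof (enum_excess_le d k (Rlt_le _ _ Hd) Hk Hdk t M x x' Hx Hx').
    pose proof (enum_excess_le d k (Rlt_le _ _ Hd) Hk Hdk t M x' x Hx' Hx).
    specialize (HT t Ht). lra.
Qed.
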